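(* Let $K\ge1$ and $m$ be positive integers, and for $k=1,\dots,K$ fix $\sigma_k^2>0$, $\lambda_k\in[0,1)$ and $\theta_k>0$ with $\sum_k\theta_k=1$. For $\gamma>0$ set $\Omega_k=\frac{\gamma\theta_k\sigma_k^2(1-\lambda_k^2)}{m}$, and for $\boldsymbol\ell=(\ell_1,\dots,\ell_K)\in\mathbb N_0^K$ let $F_{\mathcal A_{\boldsymbol\ell}}$ denote the CDF of $\prod_{k=1}^K(1+R_{\boldsymbol\ell,k})$ where $R_{\boldsymbol\ell,1},\dots,R_{\boldsymbol\ell,K}$ are independent with $R_{\boldsymbol\ell,k}\sim\mathcal G(m+\ell_k,\Omega_k)$ (so $F_{\mathcal A_{\boldsymbol\ell}}$ depends on $\gamma$). Then for every fixed $x>1$ and every $\boldsymbol\ell\in\mathbb N_0^K$ with $\boldsymbol\ell\ne\mathbf 0$, $$\lim_{\gamma\to\infty}\frac{F_{\mathcal A_{\boldsymbol\ell}}(x)}{F_{\mathcal A_{\mathbf 0}}(x)}=0,$$ i.e. $F_{\mathcal A_{\boldsymbol\ell}}(x)/F_{\mathcal A_{\mathbf 0}}(x)=o(1)$ as $\gamma\to\infty$.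
   Context: $\mathcal G(a,b)$ denotes the Gamma distribution with shape $a$ and scale $b$ (density $x^{a-1}e^{-x/b}/(\Gamma(a)b^a)$, $x>0$). *)

From HB Require Import structures.
From mathcomp Require Import all_boot all_order all_algebra.
From mathcomp Require Import all_classical all_reals all_analysis.
Set Implicit Arguments. Unset Strict Implicit. Unset Printing Implicit Defensive.
Import Order.TTheory GRing.Theory Num.Theory.
Import numFieldNormedType.Exports.
Local Open Scope classical_set_scope.
Local Open Scope ring_scope.

Definition gamma_pdf {R : realType} (a : nat) (b : R) (r : R) : R :=
  if 0 < r then r ^+ a.-1 * expR (- r / b) / ((a.-1)`!%:R * b ^+ a) else 0.

(* P( acc * prod_k (1 + R_k) <= x ) for independent R_k with densities fs,
   written as the iterated (Fubini) Lebesgue integral of the indicator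
   against the product density. *)
Fixpoint prod_cdf_aux {R : realType} (fs : seq (R -> R)) (acc x : R) : R :=
  match fs with
  | [::] => if acc <= x then 1 else 0
  | f :: fs' =>
      Rintegral (@lebesgue_measure R) `]0%R, +oo[
        (fun r => f r * prod_cdf_aux fs' (acc * (1 + r)) x)
  end.

Definition prod_cdf {R : realType} (fs : seq (R -> R)) (x : R) : R :=
  prod_cdf_aux fs 1 x.

Definition Omega {R : realType} (K m : nat) (sigma2 lambda theta : 'I_K -> R)
  (gam : R) (k : 'I_K) : R :=
  gam * theta k * sigma2 k * (1 - lambda k ^+ 2) / m%:R.

Definition F_A {R : realType} (K m : nat) (sigma2 lambda theta : 'I_K -> R)
  (ell : 'I_K -> nat) (gam : R) (x : R) : R :=
  prod_cdf [seq gamma_pdf (m + ell k) (Omega m sigma2 lambda theta gam k)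
           | k <- enum 'I_K] x.

From HB Require Import structures.
From mathcomp Require Import all_boot all_order all_algebra.
From mathcomp Require Import all_classical all_reals all_analysis.
From mathcomp Require Import measurable_realfun.
From mathcomp Require Import ring.
Import Order.TTheory GRing.Theory Num.Theory.
Import numFieldNormedType.Exports.
Local Open Scope classical_set_scope.
Local Open Scope ring_scope.

(* Only values R_k <= x matter for the event prod_k (1 + R_k) <= x, and on
   (0, x] the Gamma(m + l, b) density is at most (x / b)^l times the
   Gamma(m, b) density.  Integrating factor by factor gives
   F_{A_l}(x) <= prod_k (x / Omega_k)^{l_k} F_{A_0}(x), and the product tends
   to 0 since every Omega_k grows linearly in gamma and some l_k > 0. *)

Section ProductCdf.
Context {R : realType} (x : R).
Hypothesis x_gt1 : 1 < x.

Local Notation D := ([set` `]0%R, +oo[] : set R).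
Local Notation mu := (@lebesgue_measure R).

Lemma memD r : D r <-> 0 < r.
Proof. by rewrite /= in_itv /= andbT. Qed.

Lemma measurableD : measurable (D : set (measurableTypeR R)).
Proof. exact: measurable_itv. Qed.

Definition admissible (f : R -> R) : Prop :=
  [/\ measurable_fun D f, forall r, 0 < r -> 0 <= f r &
      exists M, forall r, 0 < r -> r <= x -> f r <= M].

(* Properties shared by every a |-> P(a * prod_k (1 + R_k) <= x). *)
Definition cdf_shape (g : R -> R) : Prop :=
  [/\ forall a, 0 <= g a, forall a, x < a -> g a = 0 &
      forall a b, 1 <= a -> a <= b -> g b <= g a].

Definition cdf_step (f g : R -> R) (a : R) : R :=
  Rintegral mu D (fun r => f r * g (a * (1 + r))).

Lemma ler1D_mul {a r : R} : 1 <= a -> 0 <= r -> 1 + r <= a * (1 + r).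
Proof. by move=> a_ge1 r_ge0; rewrite ler_peMl // addr_ge0. Qed.

Lemma ge1_mul1D (a r : R) : 1 <= a -> 0 < r -> 1 <= a * (1 + r).
Proof.
move=> a_ge1 r_gt0; apply: le_trans (ler1D_mul a_ge1 (ltW r_gt0)).
by rewrite lerDl ltW.
Qed.

Lemma gtx_mul1D (a r : R) : 1 <= a -> x < r -> x < a * (1 + r).
Proof.
move=> a_ge1 xr; have r_gt0 : 0 < r by apply: lt_trans xr; apply: lt_trans x_gt1.
by apply: (lt_le_trans xr); apply: le_trans (ler1D_mul a_ge1 (ltW r_gt0)); rewrite lerDr.
Qed.

Lemma measurable_cdf_shape g a : cdf_shape g -> 1 <= a ->
  measurable_fun D (fun r => g (a * (1 + r))).
Proof.
move=> [_ _ g_dec] a_ge1.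
have a_ge0 : 0 <= a by apply: le_trans a_ge1.
have : measurable_fun D (fun r => g (a * (1 + Num.max r 0))).
  apply: nonincreasing_measurable; first exact: measurable_itv.
  move=> r s rs; apply: g_dec.
    by apply: le_trans (ler1D_mul a_ge1 _); rewrite ?lerDl le_max lexx orbT.
  by rewrite ler_wpM2l // lerD2l ge_max !le_max rs lexx orbT.
apply: eq_measurable_fun => r /[!inE] /memD r_gt0.
by rewrite max_l // ltW.
Qed.

(* Dominated by a multiple of the indicator of [0, x], whose measure is finite. *)
Lemma integrable_bounded_vanishing (h : R -> R) (M : R) :
  measurable_fun D h -> (forall r, 0 < r -> `|h r| <= M) ->
  (forall r, x < r -> h r = 0) -> mu.-integrable D (EFin \o h).
Proof.
move=> mh h_le h0.
have ind_int : mu.-integrable D (EFin \o \1_(`[0%R, x]%classic)).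
  apply/integrableP; split; first exact/measurable_EFinP/measurable_indic.
  under eq_integral do rewrite gee0_abs ?lee_fin //.
  rewrite /comp integral_indic //; apply: (@le_lt_trans _ _ (mu `[0%R, x]%classic)).
    by apply: measureIl => //; exact: measurable_itv.
  by rewrite lebesgue_measure_itv /= lte_fin (lt_trans ltr01 x_gt1) ltry.
apply: (le_integrable measurableD _ _ (integrableZl measurableD M ind_int)).
  exact/measurable_EFinP.
move=> r /memD r_gt0 /=; rewrite lee_fin.
have M_ge0 : 0 <= M by apply: le_trans (h_le r r_gt0).
rewrite [X in _ <= X]ger0_norm ?mulr_ge0 // indicE.
have [rx|xr] := leP r x.
  by rewrite mem_set ?mulr1 ?h_le // /= in_itv /= rx ltW.
by rewrite h0 // normr0 mulr_ge0.
Qed.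

Lemma integrable_cdf_step f g a : admissible f -> cdf_shape g -> 1 <= a ->
  mu.-integrable D (EFin \o (fun r => f r * g (a * (1 + r)))).
Proof.
move=> [mf f_ge0 [M f_le]] gP a_ge1; have [g_ge0 g0 g_dec] := gP.
apply: (@integrable_bounded_vanishing _ (M * g 1)).
- by apply: measurable_funM => //; exact: measurable_cdf_shape.
- move=> r r_gt0; rewrite ger0_norm ?mulr_ge0 ?f_ge0 //.
  have [rx|xr] := leP r x.
    by rewrite ler_pM ?f_ge0 ?f_le ?g_dec ?ge1_mul1D.
  rewrite g0 ?gtx_mul1D // mulr0 mulr_ge0 ?g_ge0 //.
  by apply: le_trans (f_ge0 1 ltr01) (f_le 1 ltr01 (ltW x_gt1)).
- by move=> r xr; rewrite g0 ?gtx_mul1D ?mulr0.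
Qed.

Lemma cdf_shape_step f g : admissible f -> cdf_shape g -> cdf_shape (cdf_step f g).
Proof.
move=> fP gP; have [_ f_ge0 _] := fP; have [g_ge0 g0 g_dec] := gP.
split.
- by move=> a; apply: Rintegral_ge0 => r /memD r_gt0; rewrite mulr_ge0 ?f_ge0.
- move=> a xa; have a_ge1 : 1 <= a by apply: ltW; apply: lt_trans xa.
  rewrite /cdf_step (@eq_Rintegral _ _ _ _ _ (fun=> 0)) ?Rintegral_cst ?mul0r //.
  move=> r /[!inE] /memD r_gt0; rewrite g0 ?mulr0 //.
  by apply: (lt_le_trans xa); rewrite ler_peMr ?lerDl ?ltW // (lt_le_trans ltr01 a_ge1).
- move=> a b a_ge1 ab; have b_ge1 := le_trans a_ge1 ab.
  apply: le_Rintegral; [exact: measurableD|exact: integrable_cdf_step..|].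
  move=> r /memD r_gt0; rewrite ler_wpM2l ?f_ge0 ?g_dec ?ge1_mul1D //.
  by rewrite ler_wpM2r // addr_ge0 ?ltW.
Qed.

Lemma cdf_step_le f f' g g' (c c' a : R) :
  admissible f -> admissible f' -> cdf_shape g -> cdf_shape g' ->
  (forall r, 0 < r -> r <= x -> f r <= c * f' r) ->
  (forall b, 1 <= b -> g b <= c' * g' b) -> 1 <= a ->
  cdf_step f g a <= c * c' * cdf_step f' g' a.
Proof.
move=> fP f'P gP g'P ff' gg' a_ge1.
have [_ f_ge0 _] := fP; have [g_ge0 g0 _] := gP; have [_ g'0 _] := g'P.
rewrite /cdf_step -RintegralZl; [|exact: measurableD|exact: integrable_cdf_step].
apply: le_Rintegral; [exact: measurableD|exact: integrable_cdf_step| |].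
  apply: (eq_integrable measurableD _ _ _ (integrableZl measurableD (c * c')
    (integrable_cdf_step _ _ _ f'P g'P a_ge1))).
  by move=> r _ /=; rewrite EFinM.
move=> r /memD r_gt0; have [rx|xr] := leP r x; last first.
  by rewrite g0 ?g'0 ?gtx_mul1D // !mulr0.
rewrite mulrACA ler_pM ?f_ge0 ?g_ge0 ?ff' ?gg' ?ge1_mul1D //.
Qed.

Lemma cdf_shape_prod_cdf_aux {T : Type} {F : T -> R -> R} s :
  (forall k, admissible (F k)) -> cdf_shape (prod_cdf_aux (map F s) ^~ x).
Proof.
move=> F_adm; elim: s => [|k s IH] /=; first split=> [a|a xa|a b _ ab].
- by case: ifP.
- by rewrite leNgt xa.
- by case: ifP => [bx|_]; [rewrite (le_trans ab bx)|case: ifP].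
- exact: cdf_shape_step (F_adm k) IH.
Qed.

Lemma prod_cdf_aux_le {T : Type} {F G : T -> R -> R} {C : T -> R} s a :
  (forall k, admissible (F k)) -> (forall k, admissible (G k)) ->
  (forall k r, 0 < r -> r <= x -> F k r <= C k * G k r) -> 1 <= a ->
  prod_cdf_aux (map F s) a x <=
    (\prod_(k <- s) C k) * prod_cdf_aux (map G s) a x.
Proof.
move=> F_adm G_adm FG; elim: s a => [|k s IH] a a_ge1.
  by rewrite big_nil mul1r.
rewrite big_cons; apply: cdf_step_le (FG k) IH a_ge1 => //;
  exact: cdf_shape_prod_cdf_aux.
Qed.

End ProductCdf.

Lemma ler_wpdivrMr (R : numFieldType) (x y z : R) :
  0 <= z -> 0 <= y -> x <= y * z -> x / z <= y.
Proof.
rewrite le_eqVlt => /predU1P[<- y_ge0 _|z_gt0 _]; first by rewrite invr0 mulr0.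
by rewrite ler_pdivrMr.
Qed.

Section GammaDensity.
Context {R : realType}.

Lemma admissible_gamma_pdf (x : R) (a : nat) (b : R) :
  0 < b -> admissible x (gamma_pdf a b).
Proof.
move=> b_gt0; have c_ge0 : 0 <= ((a.-1)`!%:R * b ^+ a)^-1.
  by rewrite invr_ge0 mulr_ge0 ?exprn_ge0 ?ltW.
split.
- have : measurable_fun ([set` `]0%R, +oo[] : set R) (fun r : R =>
      r ^+ a.-1 * expR (- r / b) / ((a.-1)`!%:R * b ^+ a)).
    apply: measurable_funM => //; apply: measurable_funM.
      exact: exprn_measurable.
    apply: measurableT_comp => //; apply: measurable_funM => //.
  by apply: eq_measurable_fun => r /[!inE] /memD r_gt0; rewrite /gamma_pdf r_gt0.
- move=> r r_gt0; rewrite /gamma_pdf r_gt0.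
  by rewrite mulr_ge0 // mulr_ge0 ?expR_ge0 // exprn_ge0 // ltW.
- exists (x ^+ a.-1 / ((a.-1)`!%:R * b ^+ a)) => r r_gt0 rx.
  rewrite /gamma_pdf r_gt0 ler_wpM2r // -[leRHS]mulr1.
  have r_ge0 := ltW r_gt0.
  rewrite ler_pM ?exprn_ge0 ?expR_ge0 //.
    by rewrite lerXn2r ?nnegrE // (le_trans r_ge0 rx).
  by rewrite expR_le1 mulNr oppr_le0 divr_ge0 ?ltW.
Qed.

Lemma gamma_pdfSD (n l : nat) (b r : R) : 0 < r -> b != 0 ->
  gamma_pdf (n.+1 + l) b r =
    (r / b) ^+ l * (n`!%:R / (n + l)`!%:R) * gamma_pdf n.+1 b r.
Proof.
move=> r_gt0 b_neq0; rewrite /gamma_pdf r_gt0 addSn /= exprD -addSn exprD.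
have fact_neq0 k : (k`!%:R : R) != 0 by rewrite pnatr_eq0 -lt0n fact_gt0.
by rewrite exprMn exprVn; field; rewrite !fact_neq0 !expf_neq0.
Qed.

Lemma gamma_pdf_addn_le (x : R) (m l : nat) (b r : R) :
  (0 < m)%N -> 0 < b -> 0 < r -> r <= x ->
  gamma_pdf (m + l) b r <= (x / b) ^+ l * gamma_pdf m b r.
Proof.
case: m => // n _ b_gt0 r_gt0 rx.
rewrite gamma_pdfSD ?gt_eqF // ler_wpM2r //.
  by have [_ pdf_ge0 _] := admissible_gamma_pdf x n.+1 b b_gt0; apply: pdf_ge0.
have [r_ge0 b_ge0] := (ltW r_gt0, ltW b_gt0).
rewrite -[leRHS]mulr1 ler_pM ?exprn_ge0 ?divr_ge0 //.
  by rewrite lerXn2r ?nnegrE ?divr_ge0 ?(le_trans r_ge0 rx) // ler_pM2r ?invr_gt0.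
by rewrite ler_pdivrMr ?mul1r ?ltr0n ?fact_gt0 // ler_nat leq_fact // leq_addr.
Qed.

End GammaDensity.

Section GammaProducts.
Context {R : realType} (I : finType) (x : R).
Hypothesis x_gt1 : 1 < x.

Lemma prod_cdf_gamma_ge0 (a : I -> nat) (b : I -> R) : (forall k, 0 < b k) ->
  0 <= prod_cdf [seq gamma_pdf (a k) (b k) | k <- enum I] x.
Proof.
move=> b_gt0; have [pcdf_ge0 _ _] := cdf_shape_prod_cdf_aux _ x_gt1 (enum I)
  (fun k => admissible_gamma_pdf x (a k) (b k) (b_gt0 k)).
exact: pcdf_ge0.
Qed.

Lemma prod_cdf_gamma_le (m : nat) (ell : I -> nat) (b : I -> R) :
  (0 < m)%N -> (forall k, 0 < b k) ->
  prod_cdf [seq gamma_pdf (m + ell k) (b k) | k <- enum I] x <=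
    (\prod_k (x / b k) ^+ ell k) * prod_cdf [seq gamma_pdf m (b k) | k <- enum I] x.
Proof.
move=> m_gt0 b_gt0; rewrite -big_enum /=.
apply: (prod_cdf_aux_le _ x_gt1) => // [k|k|k r r_gt0 rx].
- exact: admissible_gamma_pdf.
- exact: admissible_gamma_pdf.
- exact: gamma_pdf_addn_le.
Qed.

End GammaProducts.

Lemma prod_expr_div_cvg0 (R : realType) (I : finType) (c : I -> R)
    (ell : I -> nat) :
  (exists k, ell k != 0%N) -> \prod_k (c k / t) ^+ ell k @[t --> +oo] --> 0.
Proof.
move=> [k0 ell_k0].
have -> : 0 = \prod_k (0 : R) ^+ ell k by rewrite (bigD1 k0) //= expr0n (negbTE ell_k0) mul0r.
apply: cvg_big => [|k _]; first exact: mul_continuous.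
have ck_div_cvg0 : c k / t @[t --> +oo] --> 0.
  rewrite -(mulr0 (c k)); apply: cvgMl_tmp.
  by apply/gtr0_cvgV0; [exact: nbhs_pinfty_gt|exact: cvg_id].
exact: (continuous_cvg _ (@exprn_continuous R (ell k) 0) ck_div_cvg0).
Qed.

Theorem lemma2 (R : realType) (K m : nat) (hK : (1 <= K)%N) (hm : (1 <= m)%N)
  (sigma2 lambda theta : 'I_K -> R)
  (hsigma : forall k, 0 < sigma2 k)
  (hlambda : forall k, 0 <= lambda k < 1)
  (htheta : forall k, 0 < theta k)
  (hsum : \sum_(k < K) theta k = 1)
  (x : R) (hx : 1 < x) (ell : 'I_K -> nat) (hell : exists k, ell k <> 0%N) :
  (fun gam : R => F_A m sigma2 lambda theta ell gam x /
                  F_A m sigma2 lambda theta (fun _ => 0%N) gam x)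
    @ +oo --> 0.
Proof.
have [k0 /eqP ell_k0] := hell.
have x_ge0 : 0 <= x by apply: ltW; apply: lt_trans hx.
pose a k := theta k * sigma2 k * (1 - lambda k ^+ 2) / m%:R.
have a_gt0 k : 0 < a k.
  have /andP [lambda_ge0 lambda_lt1] := hlambda k.
  by rewrite divr_gt0 ?ltr0n // !mulr_gt0 // subr_gt0 expr_lt1.
have OmegaE gam k : Omega m sigma2 lambda theta gam k = gam * a k.
  by rewrite /Omega /a !mulrA.
pose bound gam := \prod_k (x / a k / gam) ^+ ell k.
apply: (@squeeze_cvgr _ _ _ _ (cst 0) bound); last 2 first.
- exact: cvg_cst.
- by apply: prod_expr_div_cvg0; exists k0.
near=> gam.
have gam_gt0 : 0 < gam by near: gam; exact: nbhs_pinfty_gt.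
have Omega_gt0 k : 0 < Omega m sigma2 lambda theta gam k by rewrite OmegaE mulr_gt0.
have FA0E : F_A m sigma2 lambda theta (fun _ => 0%N) gam x =
    prod_cdf [seq gamma_pdf m (Omega m sigma2 lambda theta gam k) | k <- enum 'I_K] x.
  by congr prod_cdf; apply: eq_map => k; rewrite addn0.
have boundE : \prod_k (x / Omega m sigma2 lambda theta gam k) ^+ ell k = bound gam.
  by apply: eq_bigr => k _; rewrite OmegaE invfM mulrA mulrAC.
have bound_ge0 : 0 <= bound gam.
  by rewrite -boundE prodr_ge0 // => k _; rewrite exprn_ge0 // divr_ge0 ?(ltW (Omega_gt0 k)).
rewrite /= FA0E divr_ge0 ?prod_cdf_gamma_ge0 //= ler_wpdivrMr ?prod_cdf_gamma_ge0 //.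
by rewrite -boundE prod_cdf_gamma_le.
Unshelve. all: end_near.
Qed.
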